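(* For each $i=1,\dots,n-1$, in the ring of $n\times n$ matrices over $\mathbf{Z}[F_n\rtimes B_n]$, $$(\phi(\sigma_i)+\sigma_i g_i I)(\phi(\sigma_i)-\sigma_i I)=0,$$ where $\sigma_i g_i I$ and $\sigma_i I$ denote the scalar matrices with diagonal entries $\sigma_i g_i$ and $\sigma_i$.
   Context: The braid group $B_n$ ($n\ge2$) has generators $\sigma_1,\dots,\sigma_{n-1}$ with relations $\sigma_i\sigma_j=\sigma_j\sigma_i$ for $|i-j|>1$ and $\sigma_i\sigma_j\sigma_i=\sigma_j\sigma_i\sigma_j$ for $|i-j|=1$. Let $F_n$ be the free group on $g_1,\dots,g_n$. The semidirect product $F_n\rtimes B_n$ is the group generated by $F_n$ and $B_n$ subject to the additional relations $g_{i+1}\sigma_i=\sigma_i g_i$, $g_i\sigma_i=\sigma_i g_i g_{i+1}g_i^{-1}$, and $g_j\sigma_i=\sigma_i g_j$ for $j\notin\{i,i+1\}$. For $i=1,\dots,n-1$ let $R_i=\begin{bmatrix}0&g_i\\1&1-g_i\end{bmatrix}$, and let $\phi$ be the homomorphism from $B_n$ to the invertible $n\times n$ matrices over the group ring $\mathbf{Z}[F_n\rtimes B_n]$ (usual matrix multiplication) given by $\phi(\sigma_i)=\sigma_i\cdot\mathrm{diag}(I_{i-1},R_i,I_{n-i-1})$, where the scalar $\sigma_i$ multiplies every entry on the left. *)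

From HB Require Import structures.
From mathcomp Require Import all_boot all_order all_algebra.
Set Implicit Arguments. Unset Strict Implicit. Unset Printing Implicit Defensive.
Import GRing.Theory.
Local Open Scope ring_scope.

(* Indices are 1-based as in the paper: sig i (1 <= i <= n-1) is the image of
   sigma_i, g j (1 <= j <= n) is the image of g_j, in a ring R.  The ring
   Z[F_n x| B_n] is the universal such ring. *)

(* (a,b) entry (1-based) of diag(I_{i-1}, R_i, I_{n-i-1}) /\
   R_i = [[0, g_i], [1, 1 - g_i]]. *)
Definition Rblock_entry (R : nzRingType) (g : nat -> R) (i a b : nat) : R :=
  if (a == i) && (b == i) then 0
  else if (a == i) && (b == i.+1) then g i
  else if (a == i.+1) && (b == i) then 1
  else if (a == i.+1) && (b == i.+1) then 1 - g i
  else if a == b then 1 else 0.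

(* phi(sigma_i) = sigma_i . diag(I_{i-1}, R_i, I_{n-i-1}) (left scalar mult). *)
Definition phi (R : nzRingType) (n : nat) (sig g : nat -> R) (i : nat) : 'M[R]_n :=
  \matrix_(j < n, k < n) (sig i * Rblock_entry g i j.+1 k.+1).

Definition semidirect_relations (R : unitRingType) (n : nat) (sig g : nat -> R) : Prop :=
  (forall i, (1 <= i <= n.-1)%N -> sig i \is a GRing.unit) /\
      (forall j, (1 <= j <= n)%N -> g j \is a GRing.unit) /\
      (forall i j, (1 <= i)%N -> (j <= n.-1)%N -> (i.+1 < j)%N ->
          sig i * sig j = sig j * sig i) /\
      (forall i, (1 <= i)%N -> (i.+1 <= n.-1)%N ->
          sig i * sig i.+1 * sig i = sig i.+1 * sig i * sig i.+1) /\
      (forall i, (1 <= i <= n.-1)%N -> g i.+1 * sig i = sig i * g i) /\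
      (forall i, (1 <= i <= n.-1)%N ->
          g i * sig i = sig i * (g i * g i.+1 * (g i)^-1)) /\
      (forall i j, (1 <= i <= n.-1)%N -> (1 <= j <= n)%N -> j != i -> j != i.+1 ->
          g j * sig i = sig i * g j).

From HB Require Import structures.
From mathcomp Require Import all_boot all_order all_algebra zify.
Import GRing.Theory.
Local Open Scope ring_scope.

(* Write phi(sigma_i) = sigma_i D with D = diag(I, R_i, I).  Every row of
   D + g_i I has equal entries in the two block columns, while D - I vanishes
   outside the two block rows and its second block row is minus the first. *)

Lemma mulmx_eq_cols_opp_rows (R : pzRingType) (m n p : nat)
    (A : 'M[R]_(m, n)) (B : 'M[R]_(n, p)) (k0 k1 : 'I_n) :
  k0 != k1 ->
  (forall j, A j k0 = A j k1) ->
  (forall k l, k != k0 -> k != k1 -> B k l = 0) ->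
  (forall l, B k1 l = - B k0 l) ->
  A *m B = 0.
Proof.
move=> k01 eqA B0 oppB; apply/matrixP => j l; rewrite !mxE.
rewrite (bigD1 k0) // (bigD1 k1) 1?eq_sym //= big1; last first.
  by move=> k /andP[k1P k0P]; rewrite B0 ?mulr0.
by rewrite addr0 eqA oppB mulrN subrr.
Qed.

Section BlockEntries.
Variables (R : nzRingType) (g : nat -> R) (i : nat).

Let neS : (i == i.+1) = false. Proof. exact: ltn_eqF (ltnSn i). Qed.
Let Sne : (i.+1 == i) = false. Proof. exact: gtn_eqF (ltnSn i). Qed.
Lemma Rblock_entry_addg_eq_cols a :
  Rblock_entry g i a i + g i *+ (a == i) =
  Rblock_entry g i a i.+1 + g i *+ (a == i.+1).
Proof.
rewrite /Rblock_entry !eqxx !andbT neS Sne !andbF /=.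
case: (a =P i) => [->|_]; first by rewrite neS addr0 add0r.
by case: (a =P i.+1); rewrite ?subrK ?addr0.
Qed.

Lemma Rblock_entry_sub1_out a b :
  a != i -> a != i.+1 -> Rblock_entry g i a b - (a == b)%:R = 0.
Proof.
by move=> /negbTE ai /negbTE ai1; rewrite /Rblock_entry ai ai1 /=; case: eqP; rewrite subrr.
Qed.

Lemma Rblock_entry_sub1_opp_rows b :
  Rblock_entry g i i.+1 b - (i.+1 == b)%:R = - (Rblock_entry g i i b - (i == b)%:R).
Proof.
rewrite /Rblock_entry !eqxx neS Sne /=.
case: (b =P i) => [->|_]; first by rewrite eqxx Sne subr0 sub0r opprK.
case: (b =P i.+1) => [->|_]; last by case: (i.+1 == b); case: (i == b); rewrite /= !subrr oppr0.
by rewrite eqxx neS /= subr0 addrAC subrr sub0r.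
Qed.

End BlockEntries.

Definition Rblock_mx {R : nzRingType} (n : nat) (g : nat -> R) (i : nat) : 'M[R]_n :=
  \matrix_(j < n, k < n) Rblock_entry g i j.+1 k.+1.

Lemma phiE (R : nzRingType) (n : nat) (sig g : nat -> R) (i : nat) :
  phi n sig g i = sig i *: Rblock_mx n g i.
Proof. by apply/matrixP => j k; rewrite !mxE. Qed.

Lemma mul_Rblock_addg_scale_sub1 (R : nzRingType) (n : nat) (g : nat -> R)
    (i : nat) (c : R) :
  (0 < i < n)%N ->
  (Rblock_mx n g i + (g i)%:M) *m (c *: (Rblock_mx n g i - 1%:M)) = 0.
Proof.
case: i => [//|i] /andP[_ iltn].
pose k0 : 'I_n := Ordinal (ltnW iltn); pose k1 : 'I_n := Ordinal iltn.
apply: (mulmx_eq_cols_opp_rows _ _ _ _ _ _ k0 k1).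
- by rewrite -val_eqE /=; lia.
- move=> j; rewrite !mxE -!val_eqE /= -(eqSS j i) -(eqSS j i.+1).
  exact: Rblock_entry_addg_eq_cols.
- move=> k l; rewrite -!val_eqE /= -(eqSS k i) -(eqSS k i.+1) => k0P k1P.
  by rewrite !mxE -val_eqE /= -(eqSS k l) Rblock_entry_sub1_out ?mulr0.
- move=> l; rewrite !mxE -!val_eqE /= -(eqSS i l) -(eqSS i.+1 l).
  by rewrite Rblock_entry_sub1_opp_rows mulrN.
Qed.

Theorem proposition5p1 (R : unitRingType) (n : nat) (sig g : nat -> R) :
  (2 <= n)%N ->
  semidirect_relations n sig g ->
  forall i : nat, (1 <= i <= n.-1)%N ->
    (phi n sig g i + (sig i * g i)%:M) *m (phi n sig g i - (sig i)%:M) = 0.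
Proof.
move=> n2 _ i /andP[i1 ilen].
have iP : (0 < i < n)%N by lia.
rewrite phiE -scale_scalar_mx -(scalemx1 n (sig i)) -scalerDr -scalerBr -scalemxAl.
by rewrite mul_Rblock_addg_scale_sub1 ?scaler0.
Qed.
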